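(* Let $k\ge1$ and let $\alpha_1,\dots,\alpha_k\in[0,1]$. Define accountability weights $$w_j=\Bigl(\prod_{\ell=1}^{j}\alpha_\ell\Bigr)(1-\alpha_{j+1})\quad (j=1,\dots,k-1),\qquad w_k=\prod_{\ell=1}^{k}\alpha_\ell,$$ and let $\bar\alpha=\max_{\ell}\alpha_\ell$. Then $$\max_{j\in\{1,\dots,k\}}w_j\le 1-(1-\bar\alpha)^k.$$ In particular, if $\bar\alpha<1$, then $\max_j w_j<1$ for every finite $k$.
   Context: The $\alpha_\ell$ are the delegation degrees along a delegation chain of length $k$ (agent $\ell$ delegates to agent $\ell+1$ with degree $\alpha_\ell$); $w_j$ is the accountability weight of the $j$-th agent in the chain. *)

From mathcomp Require Import all_boot all_order all_algebra.
Set Implicit Arguments. Unset Strict Implicit. Unset Printing Implicit Defensive.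
Import Order.TTheory GRing.Theory Num.Theory.
Local Open Scope ring_scope.

(* Delegation degrees alpha_1, ..., alpha_k are given as alpha : nat -> R,
   only the values at indices 1..k are relevant. *)

Definition acc_weight (R : pzRingType) (k : nat) (alpha : nat -> R) (j : nat) : R :=
  if (j < k)%N then (\prod_(1 <= l < j.+1) alpha l) * (1 - alpha j.+1)
  else \prod_(1 <= l < k.+1) alpha l.

(* alpha_bar = max_{1 <= l <= k} alpha_l (the seed 0 is harmless as alphas are >= 0 and k >= 1). *)
Definition alpha_bar (R : realDomainType) (k : nat) (alpha : nat -> R) : R :=
  \big[Num.max/0]_(1 <= l < k.+1) alpha l.

Definition max_weight (R : realDomainType) (k : nat) (alpha : nat -> R) : R :=
  \big[Num.max/0]_(1 <= j < k.+1) acc_weight k alpha j.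

From mathcomp Require Import all_boot all_order all_algebra.
Set Implicit Arguments. Unset Strict Implicit. Unset Printing Implicit Defensive.
Import Order.TTheory GRing.Theory Num.Theory.
Local Open Scope ring_scope.

(* Every weight is at most the first delegation degree: [w_j] is a product
   of factors in [0, 1] whose first factor is [alpha_1].  Hence
   [max_j w_j <= alpha_1 <= alpha_bar], and [alpha_bar <= 1 - (1 - alpha_bar)^k]
   because [(1 - alpha_bar)^k <= 1 - alpha_bar] for [k >= 1]. *)

Lemma ler_1Bexprn1B (R : realDomainType) (x : R) (n : nat) :
  0 <= x <= 1 -> (0 < n)%N -> x <= 1 - (1 - x) ^+ n.
Proof.
move=> /andP[x0 x1] n0.
have : (1 - x) ^+ n <= (1 - x) ^+ 1.
  by apply: ler_wiXn2l; rewrite ?subr_ge0 ?gerBl.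
by rewrite expr1 lerBrDl addrC -lerBrDl.
Qed.

Lemma prod_nat_le_head (R : realDomainType) (a : nat -> R) (m n : nat) :
  (m < n)%N -> 0 <= a m -> (forall l, (m < l < n)%N -> 0 <= a l <= 1) ->
  \prod_(m <= l < n) a l <= a m.
Proof.
move=> mn am a01; rewrite big_ltn // ler_piMr //.
by rewrite big_nat_cond; apply: prodr_ile1 => l /andP[/a01].
Qed.

Section AccountabilityWeights.

Variables (R : realDomainType) (k : nat) (alpha : nat -> R).
Hypothesis k_gt0 : (0 < k)%N.
Hypothesis alpha01 : forall l, (1 <= l <= k)%N -> 0 <= alpha l <= 1.

Let alpha_ge0 l : (1 <= l <= k)%N -> 0 <= alpha l.
Proof. by move/alpha01 => /andP[]. Qed.

Lemma prefix_prod_ge0 j : (j <= k)%N -> 0 <= \prod_(1 <= l < j.+1) alpha l.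
Proof.
move=> jk; rewrite big_nat_cond; apply: prodr_ge0 => l /andP[/andP[l1 lj] _].
by rewrite alpha_ge0 // l1 -ltnS (leq_trans lj).
Qed.

Lemma prefix_prod_le_head j :
  (0 < j)%N -> (j <= k)%N -> \prod_(1 <= l < j.+1) alpha l <= alpha 1.
Proof.
move=> j0 jk; apply: prod_nat_le_head => //.
  by rewrite alpha_ge0 // (leq_trans j0 jk).
by move=> l /andP[l1 lj]; rewrite alpha01 // ltnW //= -ltnS (leq_trans lj).
Qed.

Lemma acc_weight_le_head j : (0 < j)%N -> acc_weight k alpha j <= alpha 1.
Proof.
move=> j0; rewrite /acc_weight; case: ifP => [jk | _]; last first.
  exact: prefix_prod_le_head.
apply: le_trans _ (prefix_prod_le_head j0 (ltnW jk)).
by rewrite ler_piMr ?(prefix_prod_ge0 (ltnW jk)) // gerBl alpha_ge0.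
Qed.

Lemma alpha_bar_ge_head : alpha 1 <= alpha_bar k alpha.
Proof. by rewrite /alpha_bar big_ltn // le_max lexx. Qed.

Lemma alpha_bar_ge0 : 0 <= alpha_bar k alpha.
Proof. by apply: le_trans alpha_bar_ge_head; rewrite alpha_ge0 // leqnn. Qed.

Lemma alpha_bar_le1 : alpha_bar k alpha <= 1.
Proof.
rewrite /alpha_bar big_nat_cond; apply: bigmax_le => [|l /andP[l1k _]].
  exact: ler01.
by have /andP[] := alpha01 l1k.
Qed.

Lemma max_weight_le_alpha_bar : max_weight k alpha <= alpha_bar k alpha.
Proof.
rewrite /max_weight big_nat_cond.
apply: bigmax_le => [|j /andP[/andP[j0 _] _]]; first exact: alpha_bar_ge0.
exact: le_trans (acc_weight_le_head j0) alpha_bar_ge_head.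
Qed.

End AccountabilityWeights.

Theorem proposition1 (R : realFieldType) (k : nat) (alpha : nat -> R) :
  (1 <= k)%N ->
  (forall l : nat, (1 <= l <= k)%N -> 0 <= alpha l <= 1) ->
  max_weight k alpha <= 1 - (1 - alpha_bar k alpha) ^+ k /\
  (alpha_bar k alpha < 1 -> max_weight k alpha < 1).
Proof.
move=> k_gt0 alpha01.
have weight_le_bar := max_weight_le_alpha_bar k_gt0 alpha01.
split; last exact: le_lt_trans.
apply: le_trans weight_le_bar (ler_1Bexprn1B _ k_gt0).
by rewrite alpha_bar_ge0 // alpha_bar_le1.
Qed.
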